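(* Let $R$ be a division ring and let $\{I_{a,b}\}_{a,b\in\mathbb{Z}_{\geq 0}}\subseteq R$ be a family of bimoments such that for every $n\geq 1$ the $n\times n$ matrix $M_n$ with entries $(M_n)_{r,s}=I_{n-r,\,s-1}$ ($1\le r,s\le n$) is invertible. Define $p_0=1$, $q_0=1$, and for $n\geq 1$ $$p_n(x)=x^n-\begin{bmatrix} I_{n,0} & \cdots & I_{n,n-1}\end{bmatrix} M_n^{-1}\begin{bmatrix} x^{n-1}\\ \vdots \\ x\\ 1\end{bmatrix},$$ $$q_n(y)=y^n-\begin{bmatrix} 1 & y & \cdots & y^{n-1}\end{bmatrix} M_n^{-1}\begin{bmatrix} I_{n-1,n}\\ \vdots\\ I_{0,n}\end{bmatrix}.$$ These are the quasideterminants $$p_n=\begin{vmatrix} I_{n,0} & \cdots & I_{n,n-1} & \boxed{x^{n}} \\ \vdots & \ddots & \vdots & \vdots \\ I_{1,0} & \cdots & I_{1,n-1} & x \\ I_{0,0} & \cdots & I_{0,n-1} & 1 \end{vmatrix},\qquad q_n=\begin{vmatrix} 1 & y & \cdots & \boxed{y^{n}} \\ I_{n-1,0} & I_{n-1,1} & \cdots & I_{n-1,n} \\ \vdots & \vdots & \ddots & \vdots \\ I_{0,0} & I_{0,1} & \cdots & I_{0,n} \end{vmatrix}.$$ Then $\{p_n\},\{q_n\}$ is a monic biorthogonal system with respect to $\{I_{a,b}\}$, i.e. $\langle p_n(x),q_m(y)\rangle=0$ for all $n\neq m$.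
   Context: Let $C$ be the center of $R$. Elements of $R[x]$ are written $\sum_i a_i x^i$ and elements of $R[y]$ are written $\sum_j y^j b_j$ with $a_i,b_j\in R$; $x$ and $y$ commute with elements of $C$. Given a family $\{I_{a,b}\}$ in $R$ (the bimoments), the pairing $\langle\cdot,\cdot\rangle:R[x]\times R[y]\to R$ is defined by $\langle \sum_i a_i x^i,\sum_j y^j b_j\rangle=\sum_{i,j} a_i I_{i,j} b_j$, so that $I_{a,b}=\langle x^a,y^b\rangle$. For a square matrix $A=(a_{k,l})$ of size $n+1$, the $(i,j)$-quasideterminant is $|A|_{i,j}=a_{i,j}-r_i\,(A^{i,j})^{-1}c_j$, where $A^{i,j}$ is $A$ with row $i$ and column $j$ removed (assumed invertible), $r_i$ is row $i$ of $A$ with the $j$th entry removed, and $c_j$ is column $j$ of $A$ with the $i$th entry removed; the boxed entry marks the position $(i,j)$. *)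

From HB Require Import structures.
From mathcomp Require Import all_boot all_order all_algebra.
Set Implicit Arguments. Unset Strict Implicit. Unset Printing Implicit Defensive.
Import GRing.Theory.
Local Open Scope ring_scope.

(* R : a (possibly noncommutative) unit ring; "division ring" is imposed as a
   hypothesis in the theorem.  Polynomials in x
   (resp. y) are elements of {poly R}: p`_i is the left coefficient a_i of x^i,
   q`_j is the right coefficient b_j of y^j. *)

Definition bipair (R : nzRingType) (I : nat -> nat -> R) (p q : {poly R}) : R :=
  \sum_(i < size p) \sum_(j < size q) p`_i * I i j * q`_j.

(* M_n with (M_n)_{r,s} = I_{n-r, s-1} for 1 <= r,s <= n, i.e. 0-based
   (r,s) |-> I_{n-1-r, s}. *)
Definition Mmat (R : nzRingType) (I : nat -> nat -> R) (n : nat) : 'M[R]_n :=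
  \matrix_(r < n, s < n) I (n.-1 - r)%N s.

Definition prow (R : nzRingType) (I : nat -> nat -> R) (n : nat) : 'rV[R]_n :=
  \row_(s < n) I n s.

Definition qcol (R : nzRingType) (I : nat -> nat -> R) (n : nat) : 'cV[R]_n :=
  \col_(r < n) I (n.-1 - r)%N n.

Definition p_poly (R : nzRingType) (I : nat -> nat -> R)
  (Minv : forall n, 'M[R]_n) (n : nat) : {poly R} :=
  if n is 0 then 1 else
  'X^n - \sum_(k < n) ((prow I n *m Minv n) 0 k)%:P * 'X^(n.-1 - k).

Definition q_poly (R : nzRingType) (I : nat -> nat -> R)
  (Minv : forall n, 'M[R]_n) (n : nat) : {poly R} :=
  if n is 0 then 1 else
  'X^n - \sum_(j < n) 'X^j * ((Minv n *m qcol I n) j 0)%:P.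

From HB Require Import structures.
From mathcomp Require Import all_boot all_order all_algebra.
Set Implicit Arguments.
Unset Strict Implicit.
Unset Printing Implicit Defensive.
Import GRing.Theory.
Local Open Scope ring_scope.

(* By the choice of its lower coefficients, p_n pairs with y^j (j < n) to the
   j-th entry of I_{n,.} M_n^{-1} M_n - I_{n,.} = 0; dually <x^i, q_m> = 0 for
   i < m.  The pairing is biadditive and compatible with left scalars in x and
   right scalars in y, so <p_n, q_m> is a combination of the <p_n, y^j> with
   j <= m, which all vanish when m < n; symmetrically when n < m. *)

Section Bipairing.
Variables (R : nzRingType) (I : nat -> nat -> R).

Lemma bipair_widen (p q : {poly R}) N K :
  (size p <= N)%N -> (size q <= K)%N ->
  bipair I p q = \sum_(i < N) \sum_(j < K) p`_i * I i j * q`_j.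
Proof.
move=> hp hq; rewrite /bipair.
rewrite (big_ord_widen _ (fun i => \sum_(j < size q) p`_i * I i j * q`_j) hp) big_mkcond.
apply: eq_bigr => i _; case: ltnP => [_|pi]; last first.
  by rewrite big1 // => j _; rewrite nth_default // !mul0r.
rewrite (big_ord_widen _ (fun j => p`_i * I i j * q`_j) hq) big_mkcond; apply: eq_bigr => j _.
by case: ltnP => // qj; rewrite [q`_j]nth_default ?mulr0.
Qed.

Lemma bipairBl p p' q : bipair I (p - p') q = bipair I p q - bipair I p' q.
Proof.
set N := maxn (size p) (size p').
have hB : (size (p - p')%R <= N)%N by rewrite (leq_trans (size_polyD _ _)) ?size_polyN.
rewrite (bipair_widen hB (leqnn _)) (bipair_widen (leq_maxl _ (size p')) (leqnn _)).
rewrite (bipair_widen (leq_maxr (size p) _) (leqnn _)) -sumrB.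
by apply: eq_bigr => i _; rewrite -sumrB; apply: eq_bigr => j _; rewrite coefB !mulrBl.
Qed.

Lemma bipairBr p q q' : bipair I p (q - q') = bipair I p q - bipair I p q'.
Proof.
set K := maxn (size q) (size q').
have hB : (size (q - q')%R <= K)%N by rewrite (leq_trans (size_polyD _ _)) ?size_polyN.
rewrite (bipair_widen (leqnn _) hB) (bipair_widen (leqnn _) (leq_maxl _ (size q'))).
rewrite (bipair_widen (leqnn _) (leq_maxr (size q) _)) -sumrB.
by apply: eq_bigr => i _; rewrite -sumrB; apply: eq_bigr => j _; rewrite coefB !mulrBr.
Qed.

Definition bipair_left (q : {poly R}) (p : {poly R}) := bipair I p q.

HB.instance Definition _ q :=
  GRing.isZmodMorphism.Build {poly R} R (bipair_left q) (fun p p' => bipairBl p p' q).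
HB.instance Definition _ p :=
  GRing.isZmodMorphism.Build {poly R} R (bipair I p) (bipairBr p).

Lemma bipair_suml (T : Type) (r : seq T) (F : T -> {poly R}) q :
  bipair I (\sum_(t <- r) F t) q = \sum_(t <- r) bipair I (F t) q.
Proof. exact: (raddf_sum (bipair_left q)). Qed.

Lemma bipair_sumr (T : Type) (r : seq T) p (F : T -> {poly R}) :
  bipair I p (\sum_(t <- r) F t) = \sum_(t <- r) bipair I p (F t).
Proof. exact: raddf_sum. Qed.

Lemma bipairCMl c p q : bipair I (c%:P * p) q = c * bipair I p q.
Proof.
have hc : (size (c%:P * p)%R <= size p)%N by rewrite mul_polyC size_scale_leq.
rewrite (bipair_widen hc (leqnn _)) /bipair mulr_sumr.
by apply: eq_bigr => i _; rewrite mulr_sumr; apply: eq_bigr => j _; rewrite coefCM !mulrA.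
Qed.

Lemma bipairMCr p q c : bipair I p (q * c%:P) = bipair I p q * c.
Proof.
have hc : (size (q * c%:P)%R <= size q)%N.
  by rewrite (leq_trans (size_polyMleq _ _)) // -subn1 leq_subLR addnC leq_add2r size_polyC_leq1.
rewrite (bipair_widen (leqnn _) hc) /bipair mulr_suml.
by apply: eq_bigr => i _; rewrite mulr_suml; apply: eq_bigr => j _; rewrite coefMC !mulrA.
Qed.

Lemma bipairXnXn i j : bipair I 'X^i 'X^j = I i j.
Proof.
rewrite /bipair !size_polyXn big_ord_recr /= big1 => [|a _]; last first.
  by rewrite big1 // => b _; rewrite coefXn ltn_eqF // !mul0r.
rewrite add0r big_ord_recr /= big1 => [|b _]; last by rewrite [('X^j)`_b]coefXn ltn_eqF ?mulr0.
by rewrite add0r !coefXn !eqxx mulr1 mul1r.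
Qed.

Lemma poly_expandl (p : {poly R}) : p = \sum_(i < size p) (p`_i)%:P * 'X^i.
Proof.
by rewrite -[LHS]coefK poly_def; apply: eq_bigr => i _; rewrite mul_polyC.
Qed.

Lemma poly_expandr (q : {poly R}) : q = \sum_(j < size q) 'X^j * (q`_j)%:P.
Proof.
by rewrite -[LHS]coefK poly_def; apply: eq_bigr => j _; rewrite -mul_polyC commr_polyXn.
Qed.

Lemma bipair_orthl (p q : {poly R}) N : (size p <= N)%N ->
  (forall i, (i < N)%N -> bipair I 'X^i q = 0) -> bipair I p q = 0.
Proof.
move=> hp horth; rewrite [p]poly_expandl bipair_suml big1 // => i _.
by rewrite bipairCMl horth ?mulr0 // (leq_trans (ltn_ord i)).
Qed.

Lemma bipair_orthr (p q : {poly R}) K : (size q <= K)%N ->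
  (forall j, (j < K)%N -> bipair I p 'X^j = 0) -> bipair I p q = 0.
Proof.
move=> hq horth; rewrite [q]poly_expandr bipair_sumr big1 // => j _.
by rewrite bipairMCr horth ?mul0r // (leq_trans (ltn_ord j)).
Qed.
End Bipairing.

Section Quasideterminants.
Variables (R : nzRingType) (I : nat -> nat -> R) (Minv : forall n, 'M[R]_n).

Lemma size_p_poly n : (size (p_poly I Minv n) <= n.+1)%N.
Proof.
case: n => [|n]; first by rewrite size_poly1.
apply/leq_sizeP => j hj; rewrite coefB coefXn gtn_eqF // coef_sum big1 ?subr0 // => k _.
by rewrite coefCM coefXn gtn_eqF ?mulr0 //= (leq_ltn_trans (leq_subr _ _) (ltnW hj)).
Qed.

Lemma size_q_poly n : (size (q_poly I Minv n) <= n.+1)%N.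
Proof.
case: n => [|n]; first by rewrite size_poly1.
apply/leq_sizeP => j hj; rewrite coefB coefXn gtn_eqF // coef_sum big1 ?subr0 // => k _.
by rewrite coefMC coefXn gtn_eqF ?mul0r // (ltn_trans (ltn_ord k) hj).
Qed.

Lemma bipair_p_polyXn n j :
  Minv n *m Mmat I n = 1%:M -> (j < n)%N -> bipair I (p_poly I Minv n) 'X^j = 0.
Proof.
case: n => // n hinv jn.
rewrite bipairBl bipair_suml bipairXnXn.
under eq_bigr => k _ do rewrite bipairCMl bipairXnXn.
have -> : I n.+1 j = ((prow I n.+1 *m Minv n.+1) *m Mmat I n.+1) 0 (Ordinal jn).
  by rewrite -mulmxA hinv mulmx1 mxE.
by apply/eqP; rewrite subr_eq0 mxE; apply/eqP/eq_bigr => k _; rewrite [Mmat _ _ _ _]mxE.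
Qed.

Lemma bipair_Xn_q_poly m i :
  Mmat I m *m Minv m = 1%:M -> (i < m)%N -> bipair I 'X^i (q_poly I Minv m) = 0.
Proof.
case: m => // m hinv im.
rewrite bipairBr bipair_sumr bipairXnXn.
under eq_bigr => k _ do rewrite bipairMCr bipairXnXn.
(* Row m - i of M_(m+1) is the row of moments I_{i,k}. *)
have ri : (m - i < m.+1)%N by rewrite ltnS leq_subr.
have hr : (m - (m - i))%N = i by rewrite subKn.
have -> : I i m.+1 = (Mmat I m.+1 *m (Minv m.+1 *m qcol I m.+1)) (Ordinal ri) 0.
  by rewrite mulmxA hinv mul1mx mxE /= hr.
by apply/eqP; rewrite subr_eq0 mxE; apply/eqP/eq_bigr => k _; rewrite [Mmat _ _ _ _]mxE /= hr.
Qed.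
End Quasideterminants.

Unset Implicit Arguments.

Theorem mainTheorem1 (R : unitRingType)
  (divR : forall x : R, x != 0 -> x \is a GRing.unit)
  (I : nat -> nat -> R) (Minv : forall n, 'M[R]_n)
  (hinvl : forall n, (0 < n)%N -> Minv n *m Mmat I n = 1%:M)
  (hinvr : forall n, (0 < n)%N -> Mmat I n *m Minv n = 1%:M) :
  forall n m : nat, n <> m ->
    bipair I (p_poly I Minv n) (q_poly I Minv m) = 0.
Proof.
move=> n m /eqP; rewrite neq_ltn => /orP[nm | mn].
- apply: bipair_orthl (size_p_poly I Minv n) _ => i ilt.
  by apply: bipair_Xn_q_poly; [exact: hinvr (leq_ltn_trans _ nm) | exact: leq_trans ilt nm].
- apply: bipair_orthr (size_q_poly I Minv m) _ => j jlt.
  by apply: bipair_p_polyXn; [exact: hinvl (leq_ltn_trans _ mn) | exact: leq_trans jlt mn].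
Qed.
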